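(* Work in the semifield $\mathbb{R}_{\max,+}$. Let $\bm{r}_1,\ldots,\bm{r}_m\in\mathbb{R}^{n}$ and $w_1,\ldots,w_m\in\mathbb{R}$, and define $\bm{p}=w_1\bm{r}_1\oplus\cdots\oplus w_m\bm{r}_m$ and the row vector $\bm{q}^{-}=w_1\bm{r}_1^{-}\oplus\cdots\oplus w_m\bm{r}_m^{-}$. Then the minimum of $\bm{x}^{-}\bm{p}\oplus\bm{q}^{-}\bm{x}$ over $\bm{x}\in\mathbb{R}^{n}$ equals $$\Delta=(\bm{q}^{-}\bm{p})^{1/2},$$ and it is attained at every vector $\bm{x}$ satisfying $\Delta^{-1}\bm{p}\le\bm{x}\le\Delta\bm{q}$.
   Context: $\mathbb{R}_{\max,+}=(\mathbb{R}\cup\{-\infty\},-\infty,0,\max,+)$: addition $x\oplus y=\max(x,y)$, multiplication $x\otimes y=x+y$ (the sign $\otimes$ is omitted), zero $-\infty$, identity $0$, inverse $x^{-1}=-x$, and power $x^{y}=xy$ in ordinary arithmetic (so $\Delta=(\bm{q}^{-}\bm{p})^{1/2}$ means half of the ordinary number $\bm{q}^{-}\bm{p}$). Vectors in $\mathbb{R}^n$ are columns; vector operations are entrywise with these operations, e.g. $(w\bm{r})_j=w+r_j$, and a row vector times a column vector is $\bm{u}\bm{v}=\max_j(u_j+v_j)$. For a column vector $\bm{x}=(x_j)\in\mathbb{R}^n$, $\bm{x}^{-}$ is the row vector $(-x_1,\ldots,-x_n)$; for a row vector the pseudo-inverse is the column vector obtained the same way, so $\bm{q}$ denotes the column vector whose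 entries are the negatives of those of $\bm{q}^{-}$. Inequalities between vectors are componentwise. *)

(* Max-plus algebra R_{max,+} with real (finite) entries,
   modelled in an arbitrary real field R (ordinary arithmetic). *)
From mathcomp Require Import all_boot all_order all_algebra.
Set Implicit Arguments. Unset Strict Implicit. Unset Printing Implicit Defensive.
Import Order.TTheory GRing.Theory Num.Theory.
Local Open Scope ring_scope.

Definition mpsum (R : realFieldType) (k : nat) (F : 'I_k.+1 -> R) : R :=
  \big[Num.max/F ord0]_(i < k.+1) F i.

Section MaxPlus.
Variables (R : realFieldType) (m n : nat).
Variables (r : 'I_m.+1 -> 'I_n.+1 -> R) (w : 'I_m.+1 -> R).

Definition mp_p : 'I_n.+1 -> R := fun j => mpsum (fun i => w i + r i j).

Definition mp_qminus : 'I_n.+1 -> R := fun j => mpsum (fun i => w i - r i j).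

Definition mp_q : 'I_n.+1 -> R := fun j => - mp_qminus j.

Definition mp_obj (x : 'I_n.+1 -> R) : R :=
  Num.max (mpsum (fun j => - x j + mp_p j)) (mpsum (fun j => mp_qminus j + x j)).

Definition mp_Delta : R := mpsum (fun j => mp_qminus j + mp_p j) / 2.
End MaxPlus.

From mathcomp Require Import all_boot all_order all_algebra.
From mathcomp Require Import lra.
Set Implicit Arguments. Unset Strict Implicit. Unset Printing Implicit Defensive.
Import Order.TTheory GRing.Theory Num.Theory.
Local Open Scope ring_scope.

(* For each j, (q^-)_j + p_j = ((q^-)_j + x_j) + (p_j - x_j) is at most the sum of the two
   products in the objective, hence at most twice the objective; maximizing over j gives
   q^- p <= 2 (x^- p (+) q^- x). Conversely, the bounds Delta^-1 p <= x <= Delta q say exactly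
   that every entry of x^- p and of q^- x is at most Delta, and they can be met because
   (q^-)_j + p_j <= q^- p = 2 Delta. *)

Section MpSum.
Variables (R : realFieldType) (k : nat).
Implicit Types (F f g h : 'I_k.+1 -> R) (c : R).

Lemma le_mpsum F i : F i <= mpsum F.
Proof. exact: le_bigmax. Qed.

Lemma mpsum_le F c : (forall i, F i <= c) -> mpsum F <= c.
Proof. by move=> Fc; apply: bigmax_le => // i _; apply: Fc. Qed.

Lemma mpsum_le_max2 f g h :
  (forall i, h i <= f i + g i) -> mpsum h <= 2 * Num.max (mpsum f) (mpsum g).
Proof.
move=> hfg; apply: mpsum_le => i; have := hfg i.
have := le_mpsum f i; have := le_mpsum g i.
have : mpsum f <= Num.max (mpsum f) (mpsum g) by rewrite le_max lexx.
have : mpsum g <= Num.max (mpsum f) (mpsum g) by rewrite le_max lexx orbT.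
lra.
Qed.

End MpSum.

Section Objective.
Variables (R : realFieldType) (m n : nat).
Variables (r : 'I_m.+1 -> 'I_n.+1 -> R) (w : 'I_m.+1 -> R).

Local Notation p := (mp_p r w).
Local Notation qm := (mp_qminus r w).
Local Notation q := (mp_q r w).
Local Notation Delta := (mp_Delta r w).
Local Notation obj := (mp_obj r w).

Lemma mp_Delta_le_obj x : Delta <= obj x.
Proof.
rewrite /mp_Delta ler_pdivrMr ?ltr0n // mulrC.
by apply: mpsum_le_max2 => j; lra.
Qed.

Lemma mp_obj_le_Delta x :
  (forall j, - Delta + p j <= x j /\ x j <= Delta + q j) -> obj x <= Delta.
Proof.
move=> xB; rewrite /mp_obj ge_max.
by apply/andP; split; apply: mpsum_le => j; case: (xB j); rewrite /mp_q; lra.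
Qed.

Lemma mp_Delta_bounds j : - Delta + p j <= Delta + q j.
Proof.
have := le_mpsum (fun j => qm j + p j) j.
rewrite /mp_q /mp_Delta; set S := mpsum _; lra.
Qed.

End Objective.

Theorem theorem5 (R : realFieldType) (m n : nat)
    (r : 'I_m.+1 -> 'I_n.+1 -> R) (w : 'I_m.+1 -> R) :
  (forall x : 'I_n.+1 -> R, mp_Delta r w <= mp_obj r w x) /\
  (exists x : 'I_n.+1 -> R, mp_obj r w x = mp_Delta r w) /\
  (forall x : 'I_n.+1 -> R,
     (forall j, - mp_Delta r w + mp_p r w j <= x j /\ x j <= mp_Delta r w + mp_q r w j) ->
     mp_obj r w x = mp_Delta r w).
Proof.
have attained x :
    (forall j, - mp_Delta r w + mp_p r w j <= x j /\ x j <= mp_Delta r w + mp_q r w j) ->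
    mp_obj r w x = mp_Delta r w.
  by move=> xB; apply/eqP; rewrite eq_le mp_obj_le_Delta // mp_Delta_le_obj.
split; first exact: mp_Delta_le_obj.
split; last exact: attained.
exists (fun j => - mp_Delta r w + mp_p r w j); apply: attained => j.
by split; [exact: lexx | exact: mp_Delta_bounds].
Qed.
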